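(* Let $z,a,b,c,n,m,p,q,r$ be positive integers and $$M=\begin{pmatrix} z & a & b\\ c & n & m\\ p & q & r\end{pmatrix}.$$ If $z\geq 1$, $n>ac$, $r>bp$, $m\geq bc$ and $q\geq ap$, then $\mathrm{Cat}(M)\neq\emptyset$.
   Context: For an $n\times n$ matrix $M=(m_{ij})$ with entries in the natural numbers, $\mathrm{Cat}(M)$ denotes the collection of categories $A$ with exactly $n$ distinct objects $x_1,\dots,x_n$ such that $|A(x_i,x_j)|=m_{ij}$ for all $i,j$, where $A(x_i,x_j)$ is the set of morphisms from $x_i$ to $x_j$. The paper considers matrices with strictly positive entries. *)

From mathcomp Require Import all_boot all_algebra.
Set Implicit Arguments. Unset Strict Implicit. Unset Printing Implicit Defensive.

(* A (small) category whose objects are exactly x_0, ..., x_{n-1}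
   (indexed by 'I_n, hence pairwise distinct), with finite hom-sets. *)
Record category (n : nat) := Category {
  hom : 'I_n -> 'I_n -> finType;
  idm : forall i, hom i i;
  comp : forall i j k, hom j k -> hom i j -> hom i k;
  comp_assoc : forall i j k l (h : hom k l) (g : hom j k) (f : hom i j),
      comp h (comp g f) = comp (comp h g) f;
  comp_idl : forall i j (f : hom i j), comp (idm j) f = f;
  comp_idr : forall i j (f : hom i j), comp f (idm i) = f
}.

Definition in_Cat (n : nat) (M : 'M[nat]_n) (C : category n) : Prop :=
  forall i j, #|hom C i j| = M i j.

Definition Cat_nonempty (n : nat) (M : 'M[nat]_n) : Prop :=
  exists C : category n, in_Cat M C.

Definition mx3 (z a b c n m p q r : nat) : 'M[nat]_3 :=
  \matrix_(i < 3, j < 3)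
    nth 0 (nth [::] [:: [:: z; a; b]; [:: c; n; m]; [:: p; q; r]] i) j.

(* A matrix M has a category as soon as some object o can serve as a hub.
   Put A_i := M(i, o) and B_j := M(o, j), both taken to be singletons at o.
   If every hom-set M(i, j) has room for the identity (when i = j) and for a
   copy of A_i * B_j of formal composites i -> o -> j, the remaining morphisms
   being extras that behave like the pair (0, 0), then composing two
   non-identities gives the pair (first component of the right-hand map,
   second component of the left-hand map); associativity is that of pair
   projections.  The one exception is o itself when M(o, o) = 1, where the
   formal composite o -> o -> o must be the identity.  For the 3x3 matrix the
   hub is the first object and the hypotheses n > ac, r > bp, m >= bc and
   q >= ap are exactly the room conditions. *)
From mathcomp Require Import all_boot all_algebra.
From mathcomp Require Import zify.
Set Implicit Arguments. Unset Strict Implicit.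

Inductive hub_mor := HubId | HubPair of nat & nat | HubExtra of nat.

Definition hub_fst (u : hub_mor) := if u is HubPair x _ then x else 0.
Definition hub_snd (u : hub_mor) := if u is HubPair _ y then y else 0.

Section HubCategory.
Variables (k : nat) (M : 'M[nat]_k) (o : 'I_k).
Hypotheses (col_gt0 : forall i, 0 < M i o) (row_gt0 : forall j, 0 < M o j)
  (M_ge : forall i j, i != o -> j != o -> (i == j) + M i o * M o j <= M i j).

Definition nout i := if i == o then 1 else M i o.
Definition ninn j := if j == o then 1 else M o j.

Lemma nout_gt0 i : 0 < nout i.
Proof. by rewrite /nout; case: eqP. Qed.

Lemma ninn_gt0 j : 0 < ninn j.
Proof. by rewrite /ninn; case: eqP. Qed.

(* When M o o = 1 the formal composite o -> o -> o is the identity of o. *)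
Definition collapsed i j := [&& i == o, j == o & M o o == 1].

Definition npairs i j := if collapsed i j then 0 else nout i * ninn j.

Lemma hom_room i j : (i == j) + npairs i j <= M i j.
Proof.
rewrite /npairs /collapsed /nout /ninn.
have := col_gt0 o; have := @M_ge i j.
case: (eqVneq i o) => [-> | ino]; case: (eqVneq j o) => [-> | jno] //=;
  rewrite ?eqxx ?(negbTE ino) ?(negbTE jno) /=; try case: eqP; lia.
Qed.

Lemma pair_index_lt i j x y :
  x < nout i -> y < ninn j -> x * ninn j + y < nout i * ninn j.
Proof. nia. Qed.

Definition hub_valid i j u :=
  match u with
  | HubId => i == j
  | HubPair x y => [&& x < nout i, y < ninn j & ~~ collapsed i j]
  | HubExtra t => (i == j) + npairs i j + t < M i j
  end.

Definition hub_pair i j x y := if collapsed i j then HubId else HubPair x y.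

Definition hub_comp i j (v u : hub_mor) :=
  match u, v with
  | HubId, _ => v
  | _, HubId => u
  | _, _ => hub_pair i j (hub_fst u) (hub_snd v)
  end.

Lemma hub_comp1l i j u : hub_comp i j HubId u = u.
Proof. by case: u. Qed.

Lemma hub_comp_nonid i j u v : u <> HubId -> v <> HubId ->
  hub_comp i j v u = hub_pair i j (hub_fst u) (hub_snd v).
Proof. by case: u => // [x y|t] _; case: v. Qed.

Lemma hub_fst_lt i j u : hub_valid i j u -> u <> HubId -> hub_fst u < nout i.
Proof. by case: u => //= [x y /and3P[]|t _ _] //; apply: nout_gt0. Qed.

Lemma hub_snd_lt i j u : hub_valid i j u -> u <> HubId -> hub_snd u < ninn j.
Proof. by case: u => //= [x y /and3P[]|t _ _] //; apply: ninn_gt0. Qed.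

Lemma hub_pair_valid i j x y :
  x < nout i -> y < ninn j -> hub_valid i j (hub_pair i j x y).
Proof.
rewrite /hub_pair; case: ifP => [/and3P[/eqP -> /eqP -> _] | /negbT nc] //=.
by move=> -> ->.
Qed.

Lemma hub_comp_valid i j l u v :
  hub_valid i j u -> hub_valid j l v -> hub_valid i l (hub_comp i l v u).
Proof.
case: u => [|x y|t] Hu; first by move: Hu => /= /eqP ->.
all: case: v => [|x' y'|t'] Hv; try by move: Hv => /= /eqP <-.
all: rewrite hub_comp_nonid //; apply: hub_pair_valid.
all: by [apply: hub_fst_lt Hu _ | apply: hub_snd_lt Hv _].
Qed.

Lemma hub_valid_out l w : M o o = 1 -> hub_valid o l w -> w <> HubId ->
  l != o /\ w = HubPair 0 (hub_snd w).
Proof.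
move=> Moo; case: (eqVneq l o) => [-> | lno]; case: w => //= [x y|t];
  rewrite /npairs /collapsed /nout /ninn Moo ?eqxx ?(eq_sym o) ?(negbTE lno) //=;
  try lia.
by case/andP=> /[!ltnS] /[!leqn0] /eqP ->.
Qed.

Lemma hub_valid_in i u : M o o = 1 -> hub_valid i o u -> u <> HubId ->
  i != o /\ u = HubPair (hub_fst u) 0.
Proof.
move=> Moo; case: (eqVneq i o) => [-> | ino]; case: u => //= [x y|t];
  rewrite /npairs /collapsed /nout /ninn Moo ?eqxx ?(negbTE ino) ?andbT //=;
  try lia.
by case/andP=> _ /[!ltnS] /[!leqn0] /eqP ->.
Qed.

Lemma hub_comp_assoc_nonid i j l h u v w :
  u <> HubId -> v <> HubId -> w <> HubId ->
  hub_valid i j u -> hub_valid j l v -> hub_valid l h w ->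
  hub_comp i h w (hub_comp i l v u) = hub_comp i h (hub_comp j h w v) u.
Proof.
move=> nu nv nw Hu Hv Hw.
rewrite (hub_comp_nonid _ _ nu nv) (hub_comp_nonid _ _ nv nw) /hub_pair.
case: (boolP (collapsed i l)) => [/and3P[/eqP eio /eqP elo /eqP Moo] | cil];
  case: (boolP (collapsed j h)) => [/and3P[/eqP ejo /eqP eho /eqP Moo'] | cjh].
- by move: Hw; rewrite elo eho => /hub_valid_out[] // /[!eqxx].
- move: Hw; rewrite /= elo => /hub_valid_out[] // hno ew.
  have := hub_fst_lt Hu nu; rewrite eio /nout eqxx ltnS leqn0 => /eqP fst0.
  rewrite hub_comp_nonid // /hub_pair /collapsed (negbTE hno) andbF /=.
  by rewrite fst0 {1}ew.
- move: Hu; rewrite ejo => /(hub_valid_in Moo')[] // ino Hu.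
  have := hub_snd_lt Hw nw; rewrite eho /ninn eqxx ltnS leqn0 => /eqP snd0.
  rewrite hub_comp1l hub_comp_nonid // /hub_pair /collapsed (negbTE ino) /=.
  by rewrite {2}Hu snd0.
- by rewrite !hub_comp_nonid.
Qed.

Lemma hub_comp_assoc i j l h u v w :
  hub_valid i j u -> hub_valid j l v -> hub_valid l h w ->
  hub_comp i h w (hub_comp i l v u) = hub_comp i h (hub_comp j h w v) u.
Proof.
case: u => [|x y|t]; first by move=> /= /eqP ->.
all: case: v => [|x' y'|t']; try by move=> _ /= /eqP <-.
all: case: w => [|x'' y''|t'']; try by move=> _ _ /= /eqP <-; rewrite hub_comp1l.
all: by apply: hub_comp_assoc_nonid.
Qed.

(* A morphism i -> j is stored as a number below M i j: first the identity
   (if i = j), then the formal composites in row-major order, then extras. *)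
Definition hub_encode i j u :=
  match u with
  | HubId => 0
  | HubPair x y => (i == j) + (x * ninn j + y)
  | HubExtra t => (i == j) + npairs i j + t
  end.

Definition hub_decode i j t :=
  let s := t - (i == j) in
  if t < (i == j) then HubId
  else if s < npairs i j then HubPair (s %/ ninn j) (s %% ninn j)
  else HubExtra (s - npairs i j).

Lemma pair_index_lt_npairs i j x y : hub_valid i j (HubPair x y) ->
  x * ninn j + y < npairs i j.
Proof.
by case/and3P=> x_lt y_lt /negbTE nc; rewrite /npairs nc pair_index_lt.
Qed.

Lemma hub_encode_lt i j u : hub_valid i j u -> hub_encode i j u < M i j.
Proof.
have := hom_room i j; case: u => [|x y|t] //=.
- by move=> room /eqP ij; move: room; rewrite ij eqxx; lia.
- by move=> room /pair_index_lt_npairs; lia.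
Qed.

Lemma hub_encodeK i j u : hub_valid i j u -> hub_decode i j (hub_encode i j u) = u.
Proof.
rewrite /hub_decode; case: u => [|x y|t] /=.
- by move/eqP ->; rewrite eqxx.
- move=> /[dup] /pair_index_lt_npairs lt_np /and3P[_ y_lt _].
  rewrite ltnNge leq_addr addKn lt_np divnMDl ?ninn_gt0 // modnMDl.
  by rewrite divn_small // modn_small // addn0.
- by move=> _; rewrite -addnA ltnNge leq_addr addKn ltnNge leq_addr addKn.
Qed.

Lemma hub_decodeK i j t : t < M i j -> hub_encode i j (hub_decode i j t) = t.
Proof.
move=> _; rewrite /hub_decode; case: ltnP => [t_id | id_le].
  by move: t_id; case: (i == j) => //=; case: t.
case: ltnP => [_ | s_ge] /=; first by rewrite -divn_eq subnKC.
by rewrite -addnA subnKC ?subnKC.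
Qed.

Lemma hub_decode_valid i j t : t < M i j -> hub_valid i j (hub_decode i j t).
Proof.
move=> t_lt; rewrite /hub_decode; case: ltnP => [| id_le] /=; first by case: (i == j).
case: (ltnP (t - (i == j)) (npairs i j)) => [s_lt | s_ge] /=; last by lia.
have nc : ~~ collapsed i j by move: s_lt; rewrite /npairs; case: collapsed.
move: s_lt; rewrite /npairs (negbTE nc) => s_lt.
by rewrite /= ltn_divLR ?ltn_pmod ?ninn_gt0 ?s_lt.
Qed.

Definition hub_hom (i j : 'I_k) : finType := 'I_(M i j).

Lemma hub_decode_inj i j (f g : hub_hom i j) :
  hub_decode i j f = hub_decode i j g -> f = g.
Proof.
move=> eq_fg; apply: val_inj.
by rewrite /= -[val f](hub_decodeK (ltn_ord f)) eq_fg hub_decodeK.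
Qed.

Lemma hub_idm_lt i : 0 < M i i.
Proof. by have := hom_room i i; rewrite eqxx; lia. Qed.

Definition hub_idm i : hub_hom i i := Ordinal (hub_idm_lt i).

Definition hub_comp_hom i j l (g : hub_hom j l) (f : hub_hom i j) : hub_hom i l :=
  Ordinal (hub_encode_lt (hub_comp_valid (hub_decode_valid (ltn_ord f))
                                         (hub_decode_valid (ltn_ord g)))).

Lemma hub_decode_idm i : hub_decode i i (hub_idm i) = HubId.
Proof. by rewrite /hub_decode eqxx. Qed.

Lemma hub_decode_comp i j l (g : hub_hom j l) (f : hub_hom i j) :
  hub_decode i l (hub_comp_hom g f) =
  hub_comp i l (hub_decode j l g) (hub_decode i j f).
Proof. by rewrite hub_encodeK // (hub_comp_valid (j := j)) ?hub_decode_valid. Qed.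

Lemma hub_comp_homA i j l h (f3 : hub_hom l h) (f2 : hub_hom j l) (f1 : hub_hom i j) :
  hub_comp_hom f3 (hub_comp_hom f2 f1) = hub_comp_hom (hub_comp_hom f3 f2) f1.
Proof.
apply: hub_decode_inj; rewrite !hub_decode_comp.
by apply: hub_comp_assoc; apply: hub_decode_valid.
Qed.

Lemma hub_comp_hom1l i j (f : hub_hom i j) : hub_comp_hom (hub_idm j) f = f.
Proof. by apply: hub_decode_inj; rewrite hub_decode_comp hub_decode_idm hub_comp1l. Qed.

Lemma hub_comp_hom1r i j (f : hub_hom i j) : hub_comp_hom f (hub_idm i) = f.
Proof. by apply: hub_decode_inj; rewrite hub_decode_comp hub_decode_idm. Qed.

Definition hub_category : category k :=
  Category hub_comp_homA hub_comp_hom1l hub_comp_hom1r.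

Lemma hub_Cat_nonempty : Cat_nonempty M.
Proof. by exists hub_category => i j; apply: card_ord. Qed.

End HubCategory.

Theorem mainTheorem5 (z a b c n m p q r : nat) :
  0 < z -> 0 < a -> 0 < b -> 0 < c -> 0 < n -> 0 < m -> 0 < p -> 0 < q -> 0 < r ->
  1 <= z -> a * c < n -> b * p < r -> b * c <= m -> a * p <= q ->
  Cat_nonempty (mx3 z a b c n m p q r).
Proof.
move=> z_gt0 a_gt0 b_gt0 c_gt0 _ _ p_gt0 _ _ _ ac_lt bp_lt bc_le ap_le.
apply: (@hub_Cat_nonempty _ _ ord0).
- by case=> [[|[|[|i]]] ?] //; rewrite mxE.
- by case=> [[|[|[|j]]] ?] //; rewrite mxE.
- case=> [[|[|[|i]]] ?] //; case=> [[|[|[|j]]] ?] // _ _; rewrite !mxE /=; lia.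
Qed.
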